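(* Let $\Phi_1,\Phi_2$ be quantum channels on $\mathcal D_n$ and let $|\psi_+\rangle\in\mathbb C^n\otimes\mathbb C^n$ be any maximally entangled state, with $\Phi_1$ acting on the first and $\Phi_2$ on the second factor. Then $$-\log\Big(1-\big|e^{-S_2^{\mathrm{map}}(\Phi_1)}-e^{-S_2^{\mathrm{map}}(\Phi_2)}\big|\Big)\;\le\; S_2\big((\Phi_1\otimes\Phi_2)(|\psi_+\rangle\langle\psi_+|)\big).$$
   Context: A quantum channel on $\mathcal D_n$ ($n\times n$ density matrices) is a linear, completely positive, trace-preserving map. A maximally entangled state is a unit vector in $\mathbb C^n\otimes\mathbb C^n$ whose reduced density matrices equal $\frac1n\mathbb 1$. The Jamiołkowski state of $\Phi$ is $\sigma^\Phi=(\Phi\otimes\mathrm{id})(|\phi_+\rangle\langle\phi_+|)$ with $|\phi_+\rangle=\frac1{\sqrt n}\sum_i|i\rangle\otimes|i\rangle$. The Renyi-2 entropy is $S_2(\rho)=-\log\operatorname{tr}\rho^2$ and $S_2^{\mathrm{map}}(\Phi)=S_2(\sigma^\Phi)$, so $e^{-S_2^{\mathrm{map}}(\Phi)}=\operatorname{tr}(\sigma^\Phi)^2$. *)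

(* complex scalars are an arbitrary numClosedFieldType C. *)
From HB Require Import structures.
From mathcomp Require Import all_boot all_order all_algebra.
Set Implicit Arguments. Unset Strict Implicit. Unset Printing Implicit Defensive.
Import Order.TTheory GRing.Theory Num.Theory.
Local Open Scope ring_scope.

(* bipartite indices: 'I_(n*k) <-> 'I_n * 'I_k (first factor, second factor) *)
Definition pidx (n k : nat) (i : 'I_n) (a : 'I_k) : 'I_(n * k) := mxvec_index i a.
Definition unpair (n k : nat) (p : 'I_(n * k)) : 'I_n * 'I_k :=
  enum_val (cast_ord (esym (mxvec_cast n k)) p).

Definition adj (C : numClosedFieldType) (m n : nat) (A : 'M[C]_(m, n)) : 'M[C]_(n, m) :=
  (map_mx Num.conj A)^T.

Definition psd (C : numClosedFieldType) (m : nat) (A : 'M[C]_m) : Prop :=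
  forall x : 'cV[C]_m, 0 <= (adj x *m A *m x) 0 0.

(* (Phi ⊗ id_k)(X) for X on C^n ⊗ C^k *)
Definition app_left (C : numClosedFieldType) (n k : nat)
  (Phi : 'M[C]_n -> 'M[C]_n) (X : 'M[C]_(n * k)) : 'M[C]_(n * k) :=
  \matrix_(p, q)
    Phi (\matrix_(i, j) X (pidx i (unpair p).2) (pidx j (unpair q).2))
        (unpair p).1 (unpair q).1.

(* (id_k ⊗ Psi)(X) for X on C^k ⊗ C^n *)
Definition app_right (C : numClosedFieldType) (k n : nat)
  (Psi : 'M[C]_n -> 'M[C]_n) (X : 'M[C]_(k * n)) : 'M[C]_(k * n) :=
  \matrix_(p, q)
    Psi (\matrix_(a, b) X (pidx (unpair p).1 a) (pidx (unpair q).1 b))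
        (unpair p).2 (unpair q).2.

Definition tensor_map (C : numClosedFieldType) (n : nat)
  (Phi1 Phi2 : 'M[C]_n -> 'M[C]_n) (X : 'M[C]_(n * n)) : 'M[C]_(n * n) :=
  app_left Phi1 (app_right Phi2 X).

Definition is_channel (C : numClosedFieldType) (n : nat) (Phi : 'M[C]_n -> 'M[C]_n) : Prop :=
  [/\ (forall (a : C) (X Y : 'M[C]_n), Phi (a *: X + Y) = a *: Phi X + Phi Y),
      (forall (k : nat) (A : 'M[C]_(n * k)), psd A -> psd (app_left Phi A)) &
      (forall X : 'M[C]_n, \tr (Phi X) = \tr X)].

(* |phi_+><phi_+| with phi_+ = n^{-1/2} sum_i |i>|i> *)
Definition phiplus_dm (C : numClosedFieldType) (n : nat) : 'M[C]_(n * n) :=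
  \matrix_(p, q)
    (if ((unpair p).1 == (unpair p).2) && ((unpair q).1 == (unpair q).2)
     then (n%:R)^-1 else 0).

Definition jam (C : numClosedFieldType) (n : nat) (Phi : 'M[C]_n -> 'M[C]_n) : 'M[C]_(n * n) :=
  app_left Phi (phiplus_dm C n).

Definition purity (C : numClosedFieldType) (m : nat) (rho : 'M[C]_m) : C := \tr (rho *m rho).

Definition S2 (C : numClosedFieldType) (log : C -> C) (m : nat) (rho : 'M[C]_m) : C :=
  - log (purity rho).
Definition S2map (C : numClosedFieldType) (log : C -> C) (n : nat)
  (Phi : 'M[C]_n -> 'M[C]_n) : C := S2 log (jam Phi).

Definition red1 (C : numClosedFieldType) (n : nat) (psi : 'cV[C]_(n * n)) : 'M[C]_n :=
  \matrix_(i, j) \sum_(a < n) psi (pidx i a) 0 * Num.conj (psi (pidx j a) 0).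
Definition red2 (C : numClosedFieldType) (n : nat) (psi : 'cV[C]_(n * n)) : 'M[C]_n :=
  \matrix_(a, b) \sum_(i < n) psi (pidx i a) 0 * Num.conj (psi (pidx i b) 0).

Definition max_entangled (C : numClosedFieldType) (n : nat) (psi : 'cV[C]_(n * n)) : Prop :=
  [/\ (adj psi *m psi) 0 0 = 1,
      red1 psi = (n%:R)^-1%:M & red2 psi = (n%:R)^-1%:M].

(* Write Phi1 and Phi2 in Kraus form, with operators K_k and L_l.  The output state is then
   sum_{k,l} w_kl w_kl^* with w_kl = (K_k (x) L_l) psi, the R-marginal of the pure state
   sum_{k,l} |k>|l> w_kl on I (x) J (x) R, so its purity is the purity of the IJ-marginal.
   As psi is maximally entangled, the I- and J-marginals have entries n^-1 tr (K_k adj K_k')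
   and n^-1 tr (L_l adj L_l'), and their purities are those of the Jamiolkowski states of
   Phi1 and Phi2.  Positivity of (1 - F_J)(1 - F_R) on two copies of the JR-marginal
   (F the swaps) gives 1 - tr rho_J^2 - tr rho_R^2 + tr rho_JR^2 >= 0, i.e.
   tr rho_IJ^2 + tr rho_J^2 <= 1 + tr rho_I^2; with I and J exchanged this bounds the output
   purity by 1 - |P1 - P2|, and monotonicity of log concludes. *)

From HB Require Import structures.
From mathcomp Require Import all_boot all_order all_algebra ring.
Set Implicit Arguments. Unset Strict Implicit. Unset Printing Implicit Defensive.
Import Order.TTheory GRing.Theory Num.Theory.
Local Open Scope ring_scope.

Lemma sum_involution (R : nmodType) (T : finType) (f : T -> T) (F : T -> R) :
  involutive f -> \sum_x F (f x) = \sum_x F x.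
Proof. by move=> fK; rewrite [RHS](reindex_inj (inv_inj fK)). Qed.

Lemma sum_pair (R : nmodType) (A B : finType) (F : A * B -> R) :
  \sum_x F x = \sum_a \sum_b F (a, b).
Proof. by rewrite (pair_bigA _ (fun a b => F (a, b))); apply: eq_bigr => -[]. Qed.

Lemma exchange_big2 (R : nmodType) (A B : finType) (F : A -> A -> B -> B -> R) :
  \sum_a \sum_a' \sum_b \sum_b' F a a' b b' = \sum_b \sum_b' \sum_a \sum_a' F a a' b b'.
Proof.
transitivity (\sum_a \sum_b \sum_a' \sum_b' F a a' b b').
  by apply: eq_bigr => a _; rewrite exchange_big.
rewrite exchange_big; apply: eq_bigr => b _ /=.
transitivity (\sum_a \sum_b' \sum_a' F a a' b b').
  by apply: eq_bigr => a _; rewrite exchange_big.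
by rewrite exchange_big.
Qed.

Lemma ler_sum_term (R : numDomainType) (T : finType) (F : T -> R) i :
  (forall j, 0 <= F j) -> F i <= \sum_j F j.
Proof. by move=> F_ge0; rewrite (bigD1 i) //= lerDl sumr_ge0. Qed.

Lemma mxtrace_mul_delta (C : comPzRingType) m (M : 'M[C]_m) a b :
  \tr (M *m delta_mx a b) = M b a.
Proof.
rewrite -(mul_delta_mx (0 : 'I_1)) mulmxA mxtrace_mulC mulmxA -rowE -colE.
by rewrite trace_mx11 !mxE.
Qed.

Section Adjoint.
Variable C : numClosedFieldType.

Lemma adjE m n (A : 'M[C]_(m, n)) : adj A = map_mx Num.conj A^T.
Proof. by rewrite /adj map_trmx. Qed.

Lemma adjK m n (A : 'M[C]_(m, n)) : adj (adj A) = A.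
Proof. by apply/matrixP => i j; rewrite !mxE conjCK. Qed.

Lemma adjD m n (A B : 'M[C]_(m, n)) : adj (A + B) = adj A + adj B.
Proof. by apply/matrixP => i j; rewrite !mxE rmorphD. Qed.

Lemma adjZ m n a (A : 'M[C]_(m, n)) : adj (a *: A) = a^* *: adj A.
Proof. by apply/matrixP => i j; rewrite !mxE rmorphM. Qed.

Lemma adjM m1 m2 m3 (A : 'M[C]_(m1, m2)) (B : 'M[C]_(m2, m3)) :
  adj (A *m B) = adj B *m adj A.
Proof. by rewrite /adj map_mxM trmx_mul. Qed.

Lemma adj_trmx m1 m2 (A : 'M[C]_(m1, m2)) : adj A^T = (adj A)^T.
Proof. by apply/matrixP => i j; rewrite !mxE. Qed.

Lemma adj_row m n i (A : 'M[C]_(m, n)) : adj (row i A) = col i (adj A).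
Proof. by apply/matrixP => k l; rewrite !mxE. Qed.

Lemma mul_delta_adj m n (A B : 'M[C]_(m, n)) a b :
  A *m delta_mx a b *m adj B = col a A *m adj (col b B).
Proof.
rewrite -(mul_delta_mx (0 : 'I_1)) mulmxA -colE -mulmxA; congr (_ *m _).
by rewrite -rowE; apply/matrixP => i j; rewrite !mxE.
Qed.

End Adjoint.

Section BipartiteIndex.
Variables n k : nat.

Lemma unpairK (i : 'I_n) (a : 'I_k) : unpair (pidx i a) = (i, a).
Proof. by rewrite /unpair /pidx /mxvec_index cast_ordK enum_rankK. Qed.

Lemma pidxK (p : 'I_(n * k)) : pidx (unpair p).1 (unpair p).2 = p.
Proof. by case/mxvec_indexP: p => i a; rewrite -/(pidx i a) unpairK. Qed.

Lemma sum_pidx (R : nmodType) (F : 'I_(n * k) -> R) :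
  \sum_p F p = \sum_i \sum_a F (pidx i a).
Proof.
rewrite pair_big /= (reindex (fun ia : 'I_n * 'I_k => pidx ia.1 ia.2)) //=.
by exists (@unpair n k) => [[i a] _ | p _]; rewrite ?unpairK ?pidxK.
Qed.

End BipartiteIndex.

Lemma mxtrace_mul_adj (C : numClosedFieldType) n (A B : 'M[C]_n) :
  \tr (A *m adj B) =
  \sum_(p : 'I_(n * n)) A (unpair p).1 (unpair p).2 * (B (unpair p).1 (unpair p).2)^*.
Proof.
rewrite sum_pidx /mxtrace; apply: eq_bigr => i _; rewrite mxE; apply: eq_bigr => a _.
by rewrite !unpairK !mxE.
Qed.

(** * Positive semidefinite matrices *)

Section PositiveSemidefinite.
Variables (C : numClosedFieldType) (m : nat).
Implicit Types (A : 'M[C]_m) (x y : 'cV[C]_m).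

Definition sesq A x y := (adj x *m A *m y) 0 0.

Lemma sesqDl A x y z : sesq A (x + y) z = sesq A x z + sesq A y z.
Proof. by rewrite /sesq adjD !mulmxDl mxE. Qed.

Lemma sesqDr A x y z : sesq A x (y + z) = sesq A x y + sesq A x z.
Proof. by rewrite /sesq mulmxDr mxE. Qed.

Lemma sesqZl A a x y : sesq A (a *: x) y = a^* * sesq A x y.
Proof. by rewrite /sesq adjZ -!scalemxAl mxE. Qed.

Lemma sesqZr A a x y : sesq A x (a *: y) = a * sesq A x y.
Proof. by rewrite /sesq -scalemxAr mxE. Qed.

Lemma adj_delta i : adj (delta_mx i 0 : 'cV[C]_m) = delta_mx 0 i.
Proof.
by apply/matrixP => k l; rewrite !mxE andbC; case: (_ && _); rewrite ?conjC1 ?conjC0.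
Qed.

Lemma sesq_delta A i j : sesq A (delta_mx i 0) (delta_mx j 0) = A i j.
Proof. by rewrite /sesq adj_delta -rowE -colE !mxE. Qed.

(* Polarization at x + y and x + 'i y. *)
Lemma psd_sesqC A x y : psd A -> sesq A y x = (sesq A x y)^*.
Proof.
move=> psdA; set q := fun z => sesq A z z.
have q_real z : (q z)^* = q z by exact/conj_Creal/ger0_real/psdA.
set a := sesq A x y; set b := sesq A y x.
have e1 : a^* + b^* = a + b.
  have e : a + b = q (x + y) - q x - q y.
    by rewrite /q !(sesqDl, sesqDr) -/a -/b; ring.
  by rewrite -rmorphD e !rmorphB /= !q_real.
have e2 : b^* - a^* = a - b.
  have e : 'i * (a - b) = q (x + 'i *: y) - q x - q y.
    rewrite /q !(sesqDl, sesqDr, sesqZl, sesqZr) -/a -/b conjCi.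
    by rewrite (mulrA (- 'i)) !mulNr -expr2 sqrCi; ring.
  have := congr1 Num.conj e; rewrite !rmorphB /= !q_real -e rmorphM /= conjCi.
  rewrite mulNr -mulrN => /(mulfI (neq0Ci C)) <-.
  by rewrite rmorphB opprB.
have : a^* *+ 2 = b *+ 2.
  have -> : a^* *+ 2 = (a^* + b^*) - (b^* - a^*) by ring.
  by rewrite e1 e2; ring.
by move/eqP; rewrite eqrMn2r /= => /eqP.
Qed.

Lemma psd_adj A : psd A -> adj A = A.
Proof.
move=> psdA; apply/matrixP => i j.
by rewrite !mxE -[A j i]sesq_delta -[A i j]sesq_delta (psd_sesqC _ _ psdA) conjCK.
Qed.

Lemma psd_mul_adj r (V : 'M[C]_(m, r)) : psd (V *m adj V).
Proof.
move=> x; have -> : adj x *m (V *m adj V) *m x = adj (adj V *m x) *m (adj V *m x).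
  by rewrite adjM adjK !mulmxA.
by rewrite mxE sumr_ge0 // => i _; rewrite !mxE mulrC mul_conjC_ge0.
Qed.

(* Spectral theorem: A = P^* diag(d) P with d >= 0; take V := P^* diag(sqrt d). *)
Lemma psd_factor A : psd A -> exists V : 'M[C]_m, A = V *m adj V.
Proof.
move=> psdA; set P := spectralmx A; set d := spectral_diag A.
have PU : P \is unitarymx := spectral_unitarymx A.
have PPt : P *m adj P = 1%:M by rewrite adjE; exact/unitarymxP.
have eA : A = adj P *m diag_mx d *m P.
  rewrite adjE -invmx_unitary //; apply/orthomx_spectralP/hermitian_normalmx.
  by rewrite is_hermitianmxE expr0 scale1r -adjE psd_adj.
have d_ge0 k : 0 <= d 0 k.
  have := psdA (adj (row k P)); rewrite adjK -row_mul adj_row colE mulmxA -row_mul.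
  by rewrite eA !mulmxA PPt mul1mx -mulmxA PPt mulmx1 -colE !mxE eqxx mulr1n.
exists (adj P *m diag_mx (map_mx sqrtC d)).
rewrite adjM adjK (adjE (diag_mx _)) tr_diag_mx map_diag_mx !mulmxA.
rewrite -(mulmxA (adj P)) mulmx_diag eA; congr (_ *m diag_mx _ *m _).
apply/rowP => k; rewrite !mxE -[X in _ * X]/((sqrtC (d 0 k))^*).
have /ger0_real/conj_Creal -> : 0 <= sqrtC (d 0 k) by rewrite sqrtC_ge0.
by rewrite -expr2 sqrtCK.
Qed.

End PositiveSemidefinite.

(** * Kraus representation of channels *)

Section KrausMaps.
Variables (C : numClosedFieldType) (n : nat).

Definition kraus (I : finType) (K : I -> 'M[C]_n) (X : 'M[C]_n) : 'M[C]_n :=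
  \sum_k K k *m X *m adj (K k).

Lemma kraus_is_linear (I : finType) (K : I -> 'M[C]_n) : linear (kraus K).
Proof.
move=> a X Y; rewrite /kraus scaler_sumr -big_split; apply: eq_bigr => k _ /=.
by rewrite mulmxDr mulmxDl -scalemxAr -scalemxAl.
Qed.

HB.instance Definition _ (I : finType) (K : I -> 'M[C]_n) :=
  GRing.isLinear.Build C 'M[C]_n 'M[C]_n *:%R (kraus K) (kraus_is_linear K).

Lemma kraus_outer (I : finType) (K : I -> 'M[C]_n) (u v : 'cV[C]_n) :
  kraus K (u *m adj v) = \sum_k (K k *m u) *m adj (K k *m v).
Proof. by apply: eq_bigr => k _; rewrite adjM !mulmxA. Qed.

Lemma linear_mx_delta_ext (f g : {linear 'M[C]_n -> 'M[C]_n}) :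
  (forall a b, f (delta_mx a b) = g (delta_mx a b)) -> f =1 g.
Proof.
move=> fg X; rewrite (matrix_sum_delta X) !linear_sum; apply: eq_bigr => a _.
by rewrite !linear_sum; apply: eq_bigr => b _; rewrite !linearZ fg.
Qed.

Lemma mxtrace_kraus (I : finType) (K : I -> 'M[C]_n) X :
  \tr (kraus K X) = \tr ((\sum_k adj (K k) *m K k) *m X).
Proof.
rewrite /kraus !raddf_sum mulmx_suml raddf_sum; apply: eq_bigr => k _ /=.
by rewrite mxtrace_mulC mulmxA.
Qed.

Lemma kraus_col_outer (I : finType) (M : I -> 'M[C]_n) (Y : 'M[C]_n) a b i j :
  kraus M (col a Y *m adj (col b Y)) i j =
  \sum_k (M k *m Y) i a * ((M k *m Y) j b)^*.
Proof.
rewrite kraus_outer summxE; apply: eq_bigr => k _.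
by rewrite !colE !mulmxA -!colE !mxE big_ord1 !mxE.
Qed.

End KrausMaps.

(* The Kraus operators are the reshaped columns of a Gram factor of the Choi matrix
   (Phi (x) id)(|u><u|), u = sum_i |i>|i>. *)
Lemma channel_kraus (C : numClosedFieldType) n (Phi : 'M[C]_n -> 'M[C]_n) :
  is_channel Phi -> exists K : 'I_(n * n) -> 'M[C]_n,
    Phi =1 kraus K /\ \sum_k adj (K k) *m K k = 1%:M.
Proof.
case=> lin cp tp.
pose PhiL : {linear 'M[C]_n -> 'M[C]_n} :=
  HB.pack Phi (GRing.isLinear.Build C _ _ *:%R Phi lin).
pose u : 'cV[C]_(n * n) := \col_p ((unpair p).1 == (unpair p).2)%:R.
have [V eV] := psd_factor (cp n _ (psd_mul_adj u)).
pose K k : 'M[C]_n := \matrix_(i, a) V (pidx i a) k.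
have delta_K a b : Phi (delta_mx a b) = kraus K (delta_mx a b).
  apply/matrixP => i j.
  have e : delta_mx a b = \matrix_(i', j') (u *m adj u) (pidx i' a) (pidx j' b).
    apply/matrixP => i' j'.
    by rewrite !mxE big_ord1 !mxE !unpairK /= conjC_nat -natrM mulnb.
  rewrite [in LHS]e; move/matrixP/(_ (pidx i a) (pidx j b)): eV.
  rewrite /app_left mxE !unpairK /= => ->.
  rewrite mxE summxE; apply: eq_bigr => k _.
  by rewrite mul_delta_adj !mxE big_ord1 !mxE.
have PhiK : Phi =1 kraus K := linear_mx_delta_ext (f := PhiL) delta_K.
exists K; split => //; apply/matrixP => b a.
rewrite -mxtrace_mul_delta -mxtrace_kraus -PhiK tp.
by rewrite -[delta_mx a b]mul1mx mxtrace_mul_delta.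
Qed.

(** * The tripartite purity inequality *)

Section Antisymmetrization.
Variables (C : numClosedFieldType) (T : finType) (s t : T -> T).
Hypotheses (sK : involutive s) (tK : involutive t) (stC : forall x, s (t x) = t (s x)).
Variable X : T -> C.

Definition antisym x := X x - X (s x) - X (t x) + X (s (t x)).

Lemma antisym_s x : antisym (s x) = - antisym x.
Proof. by rewrite /antisym sK -stC sK; ring. Qed.

Lemma antisym_t x : antisym (t x) = - antisym x.
Proof. by rewrite /antisym stC tK; ring. Qed.

Lemma antisym_st x : antisym (s (t x)) = antisym x.
Proof. by rewrite antisym_s antisym_t opprK. Qed.

(* antisym is odd under s and t, so sum |antisym|^2 = 4 * sum antisym * X^*. *)
Lemma antisym_dot_ge0 : 0 <= \sum_x antisym x * (X x)^*.
Proof.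
set S := \sum_x _.
have stK : involutive (s \o t) by move=> x /=; rewrite stC sK tK.
have swap f : involutive f ->
    \sum_x antisym x * (X (f x))^* = \sum_x antisym (f x) * (X x)^*.
  by move=> fK; rewrite -(sum_involution _ fK); under eq_bigr do rewrite fK.
have : \sum_x antisym x * (antisym x)^* = 4%:R * S.
  under eq_bigr do rewrite {2}/antisym !(rmorphD, rmorphN) /= !(mulrDr, mulrN).
  rewrite !(big_split, sumrN) /= (swap _ sK) (swap _ tK) (swap _ stK) /=.
  have Es : \sum_x antisym (s x) * (X x)^* = - S.
    by rewrite -sumrN; apply: eq_bigr => x _; rewrite antisym_s mulNr.
  have Et : \sum_x antisym (t x) * (X x)^* = - S.
    by rewrite -sumrN; apply: eq_bigr => x _; rewrite antisym_t mulNr.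
  have Est : \sum_x antisym (s (t x)) * (X x)^* = S.
    by apply: eq_bigr => x _; rewrite antisym_st.
  by rewrite Es Et Est -/S; ring.
move/(congr1 (fun z => 0 <= z)); rewrite pmulr_rge0 ?ltr0n // => <-.
by apply: sumr_ge0 => x _; exact: mul_conjC_ge0.
Qed.

End Antisymmetrization.

Section TripartitePurity.
Variables (C : numClosedFieldType) (I J R : finType) (w : I -> J -> R -> C).

(* w is an unnormalized pure state on I (x) J (x) R; overlap is its IJ-marginal, marg1 and
   marg2 its I- and J-marginals, and purity12 the purity of the IJ-marginal. *)
Definition overlap k l k' l' := \sum_r w k l r * (w k' l' r)^*.
Definition marg1 k k' := \sum_l overlap k l k' l.
Definition marg2 l l' := \sum_k overlap k l k l'.
Definition weight := \sum_k marg1 k k.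
Definition purity12 :=
  \sum_k \sum_l \sum_k' \sum_l' overlap k l k' l' * overlap k' l' k l.
Definition purity1 := \sum_k \sum_k' marg1 k k' * marg1 k' k.
Definition purity2 := \sum_l \sum_l' marg2 l l' * marg2 l' l.

Lemma overlapC k l k' l' : overlap k' l' k l = (overlap k l k' l')^*.
Proof.
rewrite /overlap rmorph_sum; apply: eq_bigr => r _.
by rewrite rmorphM /= conjCK mulrC.
Qed.

Section PairOfCopies.
Variables k k' : I.

Let T := ((J * J) * (R * R))%type.
Let X (x : T) := w k x.1.1 x.2.1 * w k' x.1.2 x.2.2.
Let swapJ (x : T) : T := ((x.1.2, x.1.1), x.2).
Let swapR (x : T) : T := (x.1, (x.2.2, x.2.1)).

Lemma sum_copies (F : T -> C) :
  \sum_x F x = \sum_l \sum_l' \sum_r \sum_r' F ((l, l'), (r, r')).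
Proof.
rewrite sum_pair sum_pair; apply: eq_bigr => l _; apply: eq_bigr => l' _.
exact: sum_pair.
Qed.

(* Summed over k and k', this is tr ((rho (x) rho) (1 - F_J) (1 - F_R)) >= 0 for the
   JR-marginal rho, with F_J and F_R the swaps of the two copies. *)
Lemma pair_of_copies_ge0 :
  0 <= marg1 k k * marg1 k' k'
       - \sum_l \sum_l' overlap k l' k l * overlap k' l k' l'
       - \sum_l \sum_l' overlap k' l' k l * overlap k l k' l'
       + \sum_l \sum_l' overlap k' l k l * overlap k l' k' l'.
Proof.
have factor (a b : J -> J -> R -> C) (F : T -> C) :
    (forall l l' r r', F ((l, l'), (r, r')) = a l l' r * b l l' r') ->
    \sum_x F x = \sum_l \sum_l' (\sum_r a l l' r) * (\sum_r b l l' r).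
  move=> eF; rewrite sum_copies; apply: eq_bigr => l _; apply: eq_bigr => l' _.
  by rewrite big_distrlr; apply: eq_bigr => r _; apply: eq_bigr => r' _.
have swapJK : involutive swapJ by case=> -[].
have swapRK : involutive swapR by case=> ? [].
have swapC x : swapJ (swapR x) = swapR (swapJ x) by case: x => -[? ?] [].
have := antisym_dot_ge0 swapJK swapRK swapC X.
rewrite /antisym; under eq_bigr do rewrite !(mulrDl, mulNr).
rewrite !(big_split, sumrN) /=.
rewrite (factor (fun l _ r => w k l r * (w k l r)^*)
                (fun _ l' r => w k' l' r * (w k' l' r)^*)).
rewrite (factor (fun l l' r => w k l' r * (w k l r)^*)
                (fun l l' r => w k' l r * (w k' l' r)^*)).
rewrite (factor (fun l l' r => w k' l' r * (w k l r)^*)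
                (fun l l' r => w k l r * (w k' l' r)^*)).
rewrite (factor (fun l l' r => w k' l r * (w k l r)^*)
                (fun l l' r => w k l' r * (w k' l' r)^*)).
  by rewrite /marg1 big_distrlr.
all: by move=> l l' r r'; rewrite /X /= rmorphM; ring.
Qed.

End PairOfCopies.

Lemma purity12_purity2_le : purity12 + purity2 <= weight ^+ 2 + purity1.
Proof.
have : 0 <= \sum_k \sum_k' (marg1 k k * marg1 k' k'
       - \sum_l \sum_l' overlap k l' k l * overlap k' l k' l'
       - \sum_l \sum_l' overlap k' l' k l * overlap k l k' l'
       + \sum_l \sum_l' overlap k' l k l * overlap k l' k' l').
  by apply: sumr_ge0 => k _; apply: sumr_ge0 => k' _; exact: pair_of_copies_ge0.
under eq_bigr do rewrite !(big_split, sumrN) /=.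
rewrite !(big_split, sumrN) /=.
have -> : \sum_k \sum_k' marg1 k k * marg1 k' k' = weight ^+ 2.
  by rewrite expr2 big_distrlr.
have -> : \sum_k \sum_k' \sum_l \sum_l' overlap k l' k l * overlap k' l k' l' = purity2.
  rewrite exchange_big2; apply: eq_bigr => l _; apply: eq_bigr => l' _.
  by rewrite mulrC big_distrlr.
have -> : \sum_k \sum_k' \sum_l \sum_l' overlap k' l' k l * overlap k l k' l' = purity12.
  apply: eq_bigr => k _; rewrite exchange_big; apply: eq_bigr => l _.
  by apply: eq_bigr => k' _; apply: eq_bigr => l' _; rewrite mulrC.
have -> : \sum_k \sum_k' \sum_l \sum_l' overlap k' l k l * overlap k l' k' l' = purity1.
  by apply: eq_bigr => k _; apply: eq_bigr => k' _; rewrite mulrC big_distrlr.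
move=> h; rewrite -subr_ge0.
suff -> : weight ^+ 2 + purity1 - (purity12 + purity2) =
  weight ^+ 2 - purity2 - purity12 + purity1 by [].
by ring.
Qed.

Lemma marg1C k k' : marg1 k' k = (marg1 k k')^*.
Proof. by rewrite /marg1 rmorph_sum; apply: eq_bigr => l _; rewrite overlapC. Qed.

Lemma marg2C l l' : marg2 l' l = (marg2 l l')^*.
Proof. by rewrite /marg2 rmorph_sum; apply: eq_bigr => k _; rewrite overlapC. Qed.

Lemma purity1_ge0 : 0 <= purity1.
Proof.
by apply: sumr_ge0 => k _; apply: sumr_ge0 => k' _; rewrite marg1C mulrC mul_conjC_ge0.
Qed.

Lemma purity2_ge0 : 0 <= purity2.
Proof.
by apply: sumr_ge0 => l _; apply: sumr_ge0 => l' _; rewrite marg2C mulrC mul_conjC_ge0.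
Qed.

Lemma purity12_gt0 : weight != 0 -> 0 < purity12.
Proof.
move=> w_neq0.
have [[k l] /= ov_neq0 | ov0] :=
  pickP (fun kl => overlap kl.1 kl.2 kl.1 kl.2 != 0); last first.
  move: w_neq0; rewrite /weight /marg1 big1 ?eqxx // => k _.
  by rewrite big1 // => l _; move/negbFE/eqP: (ov0 (k, l)).
have term_ge0 k1 l1 k2 l2 : 0 <= overlap k1 l1 k2 l2 * overlap k2 l2 k1 l1.
  by rewrite overlapC mulrC mul_conjC_ge0.
have ov_gt0 : 0 < overlap k l k l.
  by rewrite lt_def ov_neq0 sumr_ge0 // => r _; exact: mul_conjC_ge0.
apply: (lt_le_trans (mulr_gt0 ov_gt0 ov_gt0)); rewrite /purity12.
apply: le_trans (ler_sum_term k _); last by move=> k1; do 3 apply: sumr_ge0 => ? _.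
apply: le_trans (ler_sum_term l _); last by move=> l1; do 2 apply: sumr_ge0 => ? _.
apply: le_trans (ler_sum_term k _); last by move=> k2; apply: sumr_ge0 => ? _.
exact: ler_sum_term.
Qed.

End TripartitePurity.

Lemma purity12_norm_le (C : numClosedFieldType) (I J R : finType) (w : I -> J -> R -> C) :
  purity12 w + `|purity1 w - purity2 w| <= weight w ^+ 2.
Proof.
pose wT l k r := w k l r.
have weightT : weight wT = weight w by rewrite /weight /marg1 exchange_big.
have purity12T : purity12 wT = purity12 w.
  rewrite /purity12 exchange_big; apply: eq_bigr => k _; apply: eq_bigr => l _.
  by rewrite exchange_big.
have h1 := purity12_purity2_le w.
have h2 := purity12_purity2_le wT; rewrite weightT purity12T in h2.
have d_real : purity1 w - purity2 w \is Num.real.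
  by rewrite rpredB // ger0_real // (purity1_ge0, purity2_ge0).
rewrite addrC -lerBrDr; apply/real_ler_normlP => //; split; rewrite lerBrDr.
  by rewrite opprB addrAC lerBlDr addrC.
by rewrite addrAC lerBlDr addrC.
Qed.

(** * Channels on a maximally entangled input *)

Lemma purity_gram (C : numClosedFieldType) (X : finType) m (f : X -> 'I_m -> C) c
    (M : 'M[C]_m) :
  (forall p q, M p q = c * \sum_x f x p * (f x q)^*) ->
  purity M =
  \sum_x \sum_y (c * \sum_p f x p * (f y p)^*) * (c * \sum_p f y p * (f x p)^*).
Proof.
move=> eM; rewrite /purity /mxtrace; under eq_bigr do rewrite mxE.
transitivity (\sum_p \sum_q \sum_x \sum_y
    c * c * (f x p * (f y p)^* * (f y q * (f x q)^*))).
  apply: eq_bigr => p _; apply: eq_bigr => q _.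
  rewrite !eM mulrACA big_distrlr big_distrr /=.
  by apply: eq_bigr => x _; rewrite big_distrr; apply: eq_bigr => y _ /=; ring.
rewrite exchange_big2; apply: eq_bigr => x _; apply: eq_bigr => y _.
rewrite mulrACA big_distrlr big_distrr /=; apply: eq_bigr => p _.
by rewrite big_distrr; apply: eq_bigr => q _ /=; ring.
Qed.

Section Jamiolkowski.
Variables (C : numClosedFieldType) (n : nat) (I : finType).
Variables (Phi : 'M[C]_n -> 'M[C]_n) (K : I -> 'M[C]_n).
Hypothesis PhiK : Phi =1 kraus K.

Lemma jam_kraus p q : jam Phi p q =
  n%:R^-1 * \sum_k K k (unpair p).1 (unpair p).2 * (K k (unpair q).1 (unpair q).2)^*.
Proof.
rewrite /jam /app_left mxE PhiK.
set a := (unpair p).2; set b := (unpair q).2.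
have -> : \matrix_(i, j) phiplus_dm C n (pidx i a) (pidx j b) = n%:R^-1 *: delta_mx a b.
  apply/matrixP => i j; rewrite !mxE !unpairK /=.
  by case: (i == a); case: (j == b); rewrite /= ?mulr1 ?mulr0.
rewrite linearZ mxE summxE; congr (_ * _); apply: eq_bigr => k _.
by rewrite mul_delta_adj !mxE big_ord1 !mxE.
Qed.

Lemma purity_jam : purity (jam Phi) =
  \sum_k \sum_k' (n%:R^-1 * \tr (K k *m adj (K k'))) * (n%:R^-1 * \tr (K k' *m adj (K k))).
Proof.
rewrite (purity_gram (f := fun k p => K k (unpair p).1 (unpair p).2) jam_kraus).
by apply: eq_bigr => k _; apply: eq_bigr => k' _; rewrite !mxtrace_mul_adj.
Qed.

End Jamiolkowski.

Section MaximallyEntangledInput.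
Variables (C : numClosedFieldType) (n : nat).
Variables (Phi1 Phi2 : 'M[C]_n -> 'M[C]_n) (K L : 'I_(n * n) -> 'M[C]_n).
Hypotheses (PhiK : Phi1 =1 kraus K) (PhiL : Phi2 =1 kraus L).
Hypotheses (K1 : \sum_k adj (K k) *m K k = 1%:M) (L1 : \sum_l adj (L l) *m L l = 1%:M).
Variable psi : 'cV[C]_(n * n).
Hypothesis psi_me : max_entangled psi.

(* branch k l is (K k (x) L l) psi, reshaped as an n x n matrix. *)
Definition psi_mx : 'M[C]_n := \matrix_(i, a) psi (pidx i a) 0.
Definition branch k l : 'M[C]_n := K k *m psi_mx *m (L l)^T.
Definition branch_vec k l (p : 'I_(n * n)) := branch k l (unpair p).1 (unpair p).2.

Lemma psi_mx_mul_adj : psi_mx *m adj psi_mx = n%:R^-1%:M.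
Proof.
case: psi_me => _ <- _; apply/matrixP => i j; rewrite !mxE.
by apply: eq_bigr => a _; rewrite !mxE.
Qed.

Lemma adj_psi_mx_mul : adj psi_mx *m psi_mx = n%:R^-1%:M.
Proof.
case: psi_me => _ _ red2E; apply/matrixP => a b.
have -> : (adj psi_mx *m psi_mx) a b = red2 psi b a.
  by rewrite !mxE; apply: eq_bigr => i _; rewrite !mxE mulrC.
by rewrite red2E !mxE eq_sym.
Qed.

Lemma n_gt0 : (0 < n)%N.
Proof.
case: psi_me; case: n psi => // psi0; rewrite mxE big_ord0 => /esym/eqP.
by rewrite oner_eq0.
Qed.

Lemma overlap_branch k l k' l' :
  overlap branch_vec k l k' l' = \tr (branch k l *m adj (branch k' l')).
Proof. by rewrite mxtrace_mul_adj. Qed.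

Lemma marg1_branch k k' :
  marg1 branch_vec k k' = n%:R^-1 * \tr (K k *m adj (K k')).
Proof.
have LT1 : \sum_l (L l)^T *m adj (L l)^T = 1%:M.
  rewrite -[1%:M]trmx1 -L1 raddf_sum; apply: eq_bigr => l _ /=.
  by rewrite trmx_mul adj_trmx.
rewrite /marg1; under eq_bigr do
  rewrite overlap_branch /branch !adjM !mulmxA -(mulmxA (K k *m psi_mx)).
rewrite -raddf_sum /= -!mulmx_suml -mulmx_sumr LT1 mulmx1 -(mulmxA (K k)) psi_mx_mul_adj.
by rewrite mul_mx_scalar -scalemxAl mxtraceZ.
Qed.

Lemma marg2_branch l l' :
  marg2 branch_vec l l' = n%:R^-1 * \tr (L l *m adj (L l')).
Proof.
rewrite /marg2; under eq_bigr do
  rewrite overlap_branch /branch !adjM -!mulmxA mxtrace_mulC !mulmxA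
          -(mulmxA _ (adj (K _)) (K _)).
rewrite -raddf_sum /= -mulmx_sumr K1 mulmx1 mxtrace_mulC !mulmxA adj_psi_mx_mul.
by rewrite mul_scalar_mx -!scalemxAl mxtraceZ adj_trmx -trmx_mul mxtrace_tr mxtrace_mulC.
Qed.

Lemma weight_branch : weight branch_vec = 1.
Proof.
rewrite /weight; under eq_bigr do rewrite marg1_branch mxtrace_mulC.
by rewrite -big_distrr -raddf_sum /= K1 mxtrace1 mulVf // pnatr_eq0 -lt0n n_gt0.
Qed.

Lemma purity1_branch : purity1 branch_vec = purity (jam Phi1).
Proof.
rewrite (purity_jam PhiK); apply: eq_bigr => k _; apply: eq_bigr => k' _.
by rewrite !marg1_branch.
Qed.

Lemma purity2_branch : purity2 branch_vec = purity (jam Phi2).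
Proof.
rewrite (purity_jam PhiL); apply: eq_bigr => l _; apply: eq_bigr => l' _.
by rewrite !marg2_branch.
Qed.

Lemma output_entry p q : tensor_map Phi1 Phi2 (psi *m adj psi) p q =
  \sum_k \sum_l branch_vec k l p * (branch_vec k l q)^*.
Proof.
set i := (unpair p).1; set a := (unpair p).2; set j := (unpair q).1; set b := (unpair q).2.
pose Y l := psi_mx *m (L l)^T.
have right_entry i' j' : app_right Phi2 (psi *m adj psi) (pidx i' a) (pidx j' b) =
    \sum_l Y l i' a * (Y l j' b)^*.
  rewrite /app_right mxE !unpairK /= PhiL.
  have -> : \matrix_(a', b') (psi *m adj psi) (pidx i' a') (pidx j' b') =
      col i' psi_mx^T *m adj (col j' psi_mx^T).
    by apply/matrixP => a' b'; rewrite !mxE !big_ord1 !mxE.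
  rewrite kraus_col_outer; apply: eq_bigr => l _.
  by rewrite -[L l *m _]trmxK trmx_mul trmxK !mxE.
rewrite /tensor_map /app_left mxE PhiK.
have -> : \matrix_(i', j') app_right Phi2 (psi *m adj psi) (pidx i' a) (pidx j' b) =
    \sum_l col a (Y l) *m adj (col b (Y l)).
  apply/matrixP => i' j'; rewrite mxE right_entry summxE; apply: eq_bigr => l _.
  by rewrite !mxE big_ord1 !mxE.
rewrite linear_sum summxE exchange_big /=; apply: eq_bigr => k _.
by rewrite kraus_col_outer; apply: eq_bigr => l _; rewrite /branch_vec /branch mulmxA.
Qed.

Lemma purity12_branch :
  purity12 branch_vec = purity (tensor_map Phi1 Phi2 (psi *m adj psi)).
Proof.
rewrite (purity_gram (f := fun kl => branch_vec kl.1 kl.2) (c := 1)); last first.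
  by move=> p q; rewrite output_entry mul1r sum_pair.
rewrite sum_pair; apply: eq_bigr => k _; apply: eq_bigr => l _.
rewrite sum_pair; apply: eq_bigr => k' _; apply: eq_bigr => l' _.
by rewrite !mul1r.
Qed.

Lemma output_purity_le :
  purity (tensor_map Phi1 Phi2 (psi *m adj psi))
    + `|purity (jam Phi1) - purity (jam Phi2)| <= 1.
Proof.
have := purity12_norm_le branch_vec.
by rewrite weight_branch expr1n purity12_branch purity1_branch purity2_branch.
Qed.

Lemma output_purity_gt0 : 0 < purity (tensor_map Phi1 Phi2 (psi *m adj psi)).
Proof. by rewrite -purity12_branch purity12_gt0 // weight_branch oner_eq0. Qed.

End MaximallyEntangledInput.

Unset Implicit Arguments.

Theorem mainTheorem3 (C : numClosedFieldType) (log : C -> C)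
  (log_mono : {in Num.pos &, {homo log : x y / x <= y}})
  (n : nat) (Phi1 Phi2 : 'M[C]_n -> 'M[C]_n) (psi : 'cV[C]_(n * n)) :
  is_channel Phi1 -> is_channel Phi2 -> max_entangled psi ->
  - log (1 - `|purity (jam Phi1) - purity (jam Phi2)|)
    <= S2 log (tensor_map Phi1 Phi2 (psi *m adj psi)).
Proof.
move=> /channel_kraus[K [PhiK K1]] /channel_kraus[L [PhiL L1]] psi_me.
have out_le := output_purity_le PhiK PhiL K1 L1 psi_me.
have out_gt0 := output_purity_gt0 PhiK PhiL K1 L1 psi_me.
rewrite /S2 lerN2; apply: log_mono; rewrite ?posrE //.
  by apply: lt_le_trans out_gt0 _; rewrite lerBrDr.
by rewrite lerBrDr.
Qed.
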